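(* Let $\Omega\subset\mathbb{R}^d$ be a hypercube of side length $L$, with probability densities $\varphi_P,\varphi_D$ on $\Omega$. For an integer $r\ge1$, let $\mathcal{C}_r=\{C^1,\ldots,C^{r^d}\}$ be the partition of $\Omega$ into the grid of $r^d$ cubes of side $L/r$, and let $\overline{A}=[\overline{\alpha}_{ij}]$ be an optimal solution of the linear program: minimize $\sum_{i,j}\alpha_{ij}\max_{y\in C^i,x\in C^j}\|x-y\|$ over $\alpha_{ij}\ge0$ subject to $\sum_j\alpha_{ij}=\varphi_D(C^i)$ for all $i$ and $\sum_i\alpha_{ij}=\varphi_P(C^j)$ for all $j$. Let $Y$ have density $\varphi_D$ and let $X'$ be its shadow site: with $C^i$ the cell containing $Y$, sample $J=j'$ with probability $\overline{\alpha}_{ij'}/\varphi_D(C^i)$, then sample $X'$ from $\varphi_P$ conditioned on $X'\in C^J$. Then $$\mathbb{E}\|X'-Y\|-W(\varphi_D,\varphi_P)\le\frac{2L\sqrt{d}}{r}.$$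
   Context: For a cell $C$, $\varphi_P(C)=\int_C\varphi_P$, $\varphi_D(C)=\int_C\varphi_D$. The Euclidean Wasserstein distance is $W(\varphi_1,\varphi_2)=\inf_{\gamma\in\Gamma(\varphi_1,\varphi_2)}\int_{\Omega\times\Omega}\|y-x\|\,d\gamma(x,y)$, with $\Gamma(\varphi_1,\varphi_2)$ the set of measures on $\Omega\times\Omega$ with marginal densities $\varphi_1,\varphi_2$. *)

(* Points of R^d are represented as d.-tuple R,
   equipped with the product (= Borel) sigma-algebra of the library. *)
From HB Require Import structures.
From mathcomp Require Import all_boot all_order all_algebra.
From mathcomp Require Import all_classical all_reals all_analysis.

Unset Implicit Arguments.
Unset Strict Implicit.
Unset Printing Implicit Defensive.

Import Order.TTheory GRing.Theory Num.Theory.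
Import numFieldNormedType.Exports.

Local Open Scope classical_set_scope.
Local Open Scope ring_scope.

Section Defs.
Context {R : realType}.
Context {d : nat}.

Notation pt := (d.-tuple R).

Definition edist (x y : pt) : R :=
  Num.sqrt (\sum_(k < d) (tnth x k - tnth y k) ^+ 2).

Definition box (lo hi : pt) : set pt :=
  [set x | forall k, tnth lo k <= tnth x k <= tnth hi k].

(* lam is the d-dimensional Lebesgue measure: it gives every closed box its
   volume (this characterizes Lebesgue measure on the Borel sets). *)
Definition is_lebesgue (lam : {measure set pt -> \bar R}) : Prop :=
  forall lo hi : pt, (forall k, tnth lo k <= tnth hi k) ->
    lam (box lo hi) = (\prod_(k < d) (tnth hi k - tnth lo k))%:E.

Definition cube (a : pt) (L : R) : set pt :=
  [set x | forall k, tnth a k <= tnth x k <= tnth a k + L].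

Definition is_density (lam : {measure set pt -> \bar R}) (Om : set pt)
    (phi : pt -> R) : Prop :=
  measurable_fun Om phi /\ (forall x, Om x -> 0 <= phi x) /\
  (\int[lam]_(x in Om) (phi x)%:E = 1)%E.

(* the grid of r^d cells of side L/r, indexed by multi-indices c : 'I_d -> 'I_r.
   Cells are half-open (closed on the last layer), so they partition Omega. *)
Definition cell (a : pt) (L : R) (r : nat) (c : {ffun 'I_d -> 'I_r}) : set pt :=
  [set x | forall k,
     tnth a k + L * (c k)%:R / r%:R <= tnth x k /\
     (tnth x k < tnth a k + L * (c k).+1%:R / r%:R \/
      ((c k).+1 = r /\ tnth x k <= tnth a k + L))].

Definition cellmass (lam : {measure set pt -> \bar R}) (phi : pt -> R)
    (C : set pt) : \bar R := (\int[lam]_(x in C) (phi x)%:E)%E.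

Definition cellmax (a : pt) (L : R) (r : nat) (i j : {ffun 'I_d -> 'I_r}) : R :=
  sup [set t | exists x, exists y,
               cell a L r j x /\ cell a L r i y /\ t = edist x y].

Definition lp_feasible (lam : {measure set pt -> \bar R}) (a : pt) (L : R)
    (r : nat) (phiP phiD : pt -> R)
    (alpha : {ffun 'I_d -> 'I_r} -> {ffun 'I_d -> 'I_r} -> R) : Prop :=
  [/\ forall i j, 0 <= alpha i j,
      forall i, ((\sum_j alpha i j)%:E = cellmass lam phiD (cell a L r i)) &
      forall j, ((\sum_i alpha i j)%:E = cellmass lam phiP (cell a L r j))].

Definition lp_cost (a : pt) (L : R) (r : nat)
    (alpha : {ffun 'I_d -> 'I_r} -> {ffun 'I_d -> 'I_r} -> R) : R :=
  \sum_i \sum_j alpha i j * cellmax a L r i j.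

Definition lp_optimal lam a L r phiP phiD alpha : Prop :=
  lp_feasible lam a L r phiP phiD alpha /\
  forall beta, lp_feasible lam a L r phiP phiD beta ->
    lp_cost a L r alpha <= lp_cost a L r beta.

(* E ||X' - Y|| for the shadow site X' of Y ~ phiD:
   P(Y in dy, J = j, X' in dx)
     = phiD(y) 1_{C^i}(y) * alpha_ij / phiD(C^i) * phiP(x) 1_{C^j}(x) / phiP(C^j)
   (terms with phiD(C^i) = 0 or phiP(C^j) = 0 have probability 0). *)
Definition shadow_expectation (lam : {measure set pt -> \bar R}) (a : pt)
    (L : R) (r : nat) (phiP phiD : pt -> R)
    (alpha : {ffun 'I_d -> 'I_r} -> {ffun 'I_d -> 'I_r} -> R) : \bar R :=
  (\sum_i \sum_j
     ((alpha i j / fine (cellmass lam phiD (cell a L r i))) *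
        (fine (cellmass lam phiP (cell a L r j)))^-1)%:E *
     \int[lam]_(y in cell a L r i) \int[lam]_(x in cell a L r j)
        (phiD y * phiP x * edist x y)%:E)%E.

Definition coupling (lam : {measure set pt -> \bar R}) (Om : set pt)
    (phi1 phi2 : pt -> R) (g : {measure set (pt * pt) -> \bar R}) : Prop :=
  [/\ g (~` (Om `*` Om)) = 0%E,
      forall A, measurable A -> A `<=` Om ->
        g (A `*` Om) = (\int[lam]_(x in A) (phi1 x)%:E)%E &
      forall B, measurable B -> B `<=` Om ->
        g (Om `*` B) = (\int[lam]_(x in B) (phi2 x)%:E)%E].

Definition wasserstein (lam : {measure set pt -> \bar R}) (Om : set pt)
    (phi1 phi2 : pt -> R) : \bar R :=
  ereal_inf [set c | exists g : {measure set (pt * pt) -> \bar R},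
    coupling lam Om phi1 phi2 g /\
    c = (\int[g]_(z in Om `*` Om) (edist z.2 z.1)%:E)%E].

End Defs.

From Pilot Require Import Defs.
From HB Require Import structures.
From mathcomp Require Import all_boot all_order all_algebra.
From mathcomp Require Import all_classical all_reals all_analysis.
From mathcomp Require Import measurable_realfun lra ring.

Import Order.TTheory GRing.Theory Num.Theory.
Import numFieldNormedType.Exports.

Local Open Scope classical_set_scope.
Local Open Scope ring_scope.

(* Let delta = (L/r) sqrt d be the diameter of a grid cell. Moving x and y
   inside their cells changes ||x - y|| by at most 2 delta, so the LP cost
   max_{C^i x C^j} ||x - y|| is within 2 delta of every distance it bounds.
   Hence E||X' - Y|| <= sum_ij alpha_ij max_{C^i x C^j} ||x - y||, the LP
   optimum.  Conversely a coupling gamma of phi_D and phi_P induces the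
   feasible LP point beta_ij = gamma(C^i x C^j) of total mass 1, and
   int ||x - y|| dgamma >= sum_ij beta_ij (max_{C^i x C^j} ||x - y|| - 2 delta)
   >= LP optimum - 2 delta. *)

Section SquareSums.
Context {R : rcfType} {I : finType}.
Implicit Types u v : I -> R.

Lemma sqr_sum_ge0 u : 0 <= \sum_k u k ^+ 2.
Proof. by apply: sumr_ge0 => k _; exact: sqr_ge0. Qed.

Lemma sum_sqr_eq0 u : \sum_k u k ^+ 2 = 0 -> forall k, u k = 0.
Proof.
move/eqP; rewrite psumr_eq0 => [/allP u0 k|k _]; last exact: sqr_ge0.
by apply/eqP; rewrite -sqrf_eq0; exact: u0 (mem_index_enum k).
Qed.

Lemma cauchy_schwarz_sum u v :
  \sum_k u k * v k <= Num.sqrt (\sum_k u k ^+ 2) * Num.sqrt (\sum_k v k ^+ 2).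
Proof.
set A := \sum_k u k ^+ 2; set B := \sum_k v k ^+ 2; set S := \sum_k u k * v k.
set s := Num.sqrt A; set t := Num.sqrt B.
have sA : s ^+ 2 = A by rewrite sqr_sqrtr // sqr_sum_ge0.
have tB : t ^+ 2 = B by rewrite sqr_sqrtr // sqr_sum_ge0.
have [s0|s_neq0] := eqVneq s 0.
  have A0 : A = 0 by rewrite -sA s0 expr0n.
  by rewrite /S big1 ?s0 ?mul0r // => k _; rewrite (sum_sqr_eq0 _ A0) mul0r.
have [t0|t_neq0] := eqVneq t 0.
  have B0 : B = 0 by rewrite -tB t0 expr0n.
  by rewrite /S big1 ?t0 ?mulr0 // => k _; rewrite (sum_sqr_eq0 _ B0) mulr0.
have : 0 <= \sum_k (t * u k - s * v k) ^+ 2 by exact: sqr_sum_ge0.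
have -> : \sum_k (t * u k - s * v k) ^+ 2 = t ^+ 2 * A - 2 * s * t * S + s ^+ 2 * B.
  rewrite /A /B /S !mulr_sumr -!sumrB -big_split /=; apply: eq_bigr => k _; ring.
rewrite sA tB => expand_ge0.
have st_gt0 : 0 < s * t by rewrite mulr_gt0 // lt0r ?s_neq0 ?t_neq0 sqrtr_ge0.
rewrite -(ler_pM2l st_gt0).
have -> : s * t * (s * t) = A * B by rewrite -sA -tB; ring.
nra.
Qed.

Lemma minkowski_sum u v :
  Num.sqrt (\sum_k (u k + v k) ^+ 2) <=
  Num.sqrt (\sum_k u k ^+ 2) + Num.sqrt (\sum_k v k ^+ 2).
Proof.
set s := Num.sqrt (\sum_k u k ^+ 2); set t := Num.sqrt (\sum_k v k ^+ 2).
have s0 : 0 <= s by apply: sqrtr_ge0.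
have t0 : 0 <= t by apply: sqrtr_ge0.
rewrite -[leRHS]ger0_norm ?addr_ge0 // -sqrtr_sqr; apply: ler_wsqrtr.
have -> : \sum_k (u k + v k) ^+ 2 =
    \sum_k u k ^+ 2 + 2 * (\sum_k u k * v k) + \sum_k v k ^+ 2.
  rewrite mulr_sumr -!big_split /=; apply: eq_bigr => k _; ring.
have := cauchy_schwarz_sum u v; rewrite -/s -/t => cs.
have -> : (s + t) ^+ 2 = s ^+ 2 + 2 * (s * t) + t ^+ 2 by ring.
rewrite !sqr_sqrtr ?sqr_sum_ge0 //; lra.
Qed.

End SquareSums.

Section EuclideanDistance.
Context {R : realType} {d : nat}.
Implicit Types x y z : d.-tuple R.

Lemma edist_tuple_triangle x y z : Defs.edist x z <= Defs.edist x y + Defs.edist y z.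
Proof.
rewrite /Defs.edist.
have -> : \sum_k (tnth x k - tnth z k) ^+ 2 =
    \sum_k ((tnth x k - tnth y k) + (tnth y k - tnth z k)) ^+ 2.
  by apply: eq_bigr => k _; rewrite addrA subrK.
exact: minkowski_sum.
Qed.

End EuclideanDistance.

Definition cell_diam {R : realType} (d : nat) (L : R) (r : nat) : R :=
  L / r%:R * Num.sqrt d%:R.

Section Grid.
Context {R : realType} {d : nat}.
Variables (a : d.-tuple R) (L : R) (r : nat).
Hypotheses (L_gt0 : 0 < L) (r_gt0 : (0 < r)%N).
Notation C := (cell a L r).

Let r_pos : 0 < (r%:R : R). Proof. by rewrite ltr0n. Qed.
Let side_gt0 : 0 < L / r%:R. Proof. by rewrite divr_gt0. Qed.
Let gridE n : L * n%:R / r%:R = L / r%:R * n%:R. Proof. by rewrite mulrAC. Qed.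
Let sideSE n : L / r%:R * n.+1%:R = L / r%:R * n%:R + L / r%:R.
Proof. by rewrite -natr1 mulrDr mulr1. Qed.
Let side_rE : L / r%:R * r%:R = L. Proof. by rewrite divfK // gt_eqF. Qed.

Lemma cell_coord_bounds c x k : C c x ->
  tnth a k + L / r%:R * (c k)%:R <= tnth x k <= tnth a k + L / r%:R * (c k)%:R + L / r%:R.
Proof.
move=> /(_ k); rewrite !gridE sideSE addrA => -[-> [/ltW -> //|[ck_last x_le]]].
by rewrite -addrA -sideSE ck_last side_rE.
Qed.

Lemma edist_cell_le c x y : C c x -> C c y -> Defs.edist x y <= cell_diam d L r.
Proof.
move=> cx cy; rewrite /cell_diam.
have -> : L / r%:R * Num.sqrt d%:R = Num.sqrt (\sum_(k < d) (L / r%:R) ^+ 2).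
  rewrite sumr_const card_ord -(mulr_natr ((L / r%:R) ^+ 2)) (sqrtrM _ (sqr_ge0 _)).
  by rewrite sqrtr_sqr ger0_norm // ltW.
apply: ler_wsqrtr; apply: ler_sum => k _.
have := cell_coord_bounds c x k cx; have := cell_coord_bounds c y k cy.
move: (tnth a k + _) => lo /andP[y1 y2] /andP[x1 x2].
nra.
Qed.

Lemma edist_cells_le i j x x' y y' : C j x -> C j x' -> C i y -> C i y' ->
  Defs.edist x' y' <= Defs.edist x y + 2 * cell_diam d L r.
Proof.
move=> cx cx' cy cy'.
have := edist_tuple_triangle x' x y'; have := edist_tuple_triangle x y y'.
have := edist_cell_le j x' x cx' cx; have := edist_cell_le i y y' cy cy'.
lra.
Qed.

Lemma cell_sub_cube c : C c `<=` cube a L.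
Proof.
move=> x cx k; have /andP[lo hi] := cell_coord_bounds c x k cx.
have ck0 : 0 <= ((c k)%:R : R) by rewrite ler0n.
have ckr : ((c k).+1%:R : R) <= r%:R by rewrite ler_nat.
rewrite -(ler_pM2l side_gt0) side_rE sideSE in ckr.
apply/andP; split; nra.
Qed.

Lemma cell_uniq c c' x : C c x -> C c' x -> c = c'.
Proof.
have index_le (b b' : {ffun 'I_d -> 'I_r}) k : C b x -> C b' x -> (b k <= b' k)%N.
  move=> /(_ k) [lo _] /(_ k) [_ [hi|[b'_last _]]]; last by rewrite -ltnS b'_last.
  rewrite !gridE in lo hi.
  by rewrite -ltnS -(ltr_nat R) -(ltr_pM2l side_gt0); lra.
move=> cx c'x; apply/ffunP => k; apply/val_inj/eqP.
by rewrite eqn_leq !index_le.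
Qed.

Lemma cell_nonempty c : C c !=set0.
Proof.
exists [tuple tnth a k + L * (c k)%:R / r%:R | k < d] => k.
rewrite tnth_mktuple; split => //; left.
by rewrite !gridE ltrD2l ltr_pM2l // ltr_nat.
Qed.

Lemma cube_sub_cells x : cube a L x -> exists c, C c x.
Proof.
move=> cube_x.
have index_lt k : (minn (Num.truncn ((tnth x k - tnth a k) / (L / r%:R))) r.-1 < r)%N.
  by rewrite (leq_ltn_trans (geq_minr _ _)) // ltn_predL.
exists [ffun k => Ordinal (index_lt k)] => k; rewrite ffunE /= !gridE.
have /andP[x_lo x_hi] := cube_x k.
set z := (tnth x k - tnth a k) / (L / r%:R).
have z_ge0 : 0 <= z by rewrite divr_ge0 ?subr_ge0 // ltW.
have /andP[t_lo t_hi] := truncn_itv z_ge0.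
rewrite ler_pdivlMr // mulrC in t_lo; rewrite ltr_pdivrMr // mulrC in t_hi.
case: leqP => [t_le|t_gt].
  by split; [lra | left; lra].
have : ((r.-1)%:R : R) <= (Num.truncn z)%:R by rewrite ler_nat ltnW.
rewrite -(ler_pM2l side_gt0) => le_r1.
by split; [lra | right; rewrite prednK].
Qed.

Lemma trivIset_cell : trivIset setT C.
Proof. by move=> c c' _ _ [x [cx c'x]]; exact: cell_uniq cx c'x. Qed.

Lemma cube_bigcup_cell : cube a L = \bigcup_c C c.
Proof.
apply/seteqP; split => [x /cube_sub_cells [c cx]|x [c _ /cell_sub_cube //]].
by exists c.
Qed.

Lemma edist_le_cellmax i j x y : C j x -> C i y -> Defs.edist x y <= cellmax a L r i j.
Proof.
move=> Cx Cy; apply: ub_le_sup; last by exists x, y.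
exists (Defs.edist x y + 2 * cell_diam d L r) => _ [x' [y' [Cx' [Cy' ->]]]].
exact: edist_cells_le Cx Cx' Cy Cy'.
Qed.

Lemma cellmax_le i j x y : C j x -> C i y ->
  cellmax a L r i j <= Defs.edist x y + 2 * cell_diam d L r.
Proof.
move=> Cx Cy; apply: ge_sup; first by exists (Defs.edist x y), x, y.
move=> _ [x' [y' [Cx' [Cy' ->]]]]; exact: edist_cells_le Cx Cx' Cy Cy'.
Qed.

Lemma cellmax_ge0 i j : 0 <= cellmax a L r i j.
Proof.
have [x Cx] := cell_nonempty j.
have [y Cy] := cell_nonempty i.
exact: le_trans (sqrtr_ge0 _) (edist_le_cellmax _ _ _ _ Cx Cy).
Qed.

End Grid.

Section GridMeasurability.
Context {R : realType} {d : nat}.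
Variables (a : d.-tuple R) (L : R).

Lemma measurable_tuple_setX (P : 'I_d -> set R) : (forall k, measurable (P k)) ->
  measurable [set x : d.-tuple R | forall k, P k (tnth x k)].
Proof.
move=> mP; have -> : [set x | forall k, P k (tnth x k)] =
    \bigcap_k ((fun x : d.-tuple R => tnth x k) @^-1` P k).
  by apply/seteqP; split => x /= Px k; [move=> _ | apply: Px].
apply: fin_bigcap_measurable => [|k _]; first exact: finite_finset.
by rewrite -[X in measurable X]setTI; exact: measurable_tnth.
Qed.

Lemma measurable_cell r c : measurable (cell a L r c).
Proof.
apply: (measurable_tuple_setX (fun k =>
  [set t | tnth a k + L * (c k)%:R / r%:R <= t] `&`
  ([set t | t < tnth a k + L * (c k).+1%:R / r%:R] `|`
   ([set _ | (c k).+1 = r] `&` [set t | t <= tnth a k + L])))) => k.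
have mP (P : Prop) : measurable [set _ : R | P].
  have [p|np] := pselect P.
    by rewrite (_ : [set _ | P] = setT) //; apply/seteqP; split.
  by rewrite (_ : [set _ | P] = set0) //; apply/seteqP; split.
apply: measurableI; first by apply: closed_measurable; exact: closed_ge.
apply: measurableU; first by apply: open_measurable; exact: open_lt.
by apply: measurableI; [exact: mP | apply: closed_measurable; exact: closed_le].
Qed.

Lemma measurable_cube : measurable (cube a L).
Proof.
apply: (measurable_tuple_setX (fun k => [set t | tnth a k <= t <= tnth a k + L])) => k.
rewrite (_ : [set t | _] = `[tnth a k, tnth a k + L]%classic); first exact: measurable_itv.
by apply/seteqP; split => t /=; rewrite in_itv.
Qed.

End GridMeasurability.

Section NonnegIntegral.
Local Open Scope ereal_scope.
Context {dT : measure_display} {T : measurableType dT} {R : realType}.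
Variable mu : {measure set T -> \bar R}.

(* Unlike [ge0_le_integral], no measurability is required: both integrals
   are suprema over the simple functions below the integrand. *)
Lemma le_ge0_integral (D : set T) (f g : T -> \bar R) :
  (forall x, D x -> 0 <= f x) -> (forall x, D x -> f x <= g x) ->
  \int[mu]_(x in D) f x <= \int[mu]_(x in D) g x.
Proof.
move=> f0 fg.
have g0 x : D x -> 0 <= g x by move=> Dx; exact: le_trans (f0 x Dx) (fg x Dx).
rewrite (ge0_integralE _ f0) (ge0_integralE _ g0).
apply: ereal_sup_le => _ [h h_le <-]; exists h => //= x.
by apply: le_trans (h_le x) _; rewrite /patch; case: ifP => // /set_mem /fg.
Qed.

Lemma measure_bigcup_fin (I : finType) (F : I -> set T) :
  (forall i, measurable (F i)) -> trivIset setT F ->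
  mu (\bigcup_i F i) = \sum_i mu (F i).
Proof.
move=> mF tF.
have -> : \bigcup_i F i = \big[setU/set0]_i F i.
  rewrite -bigcup_seq; congr bigcup.
  by apply/seteqP; split => i // _; exact: mem_index_enum.
rewrite (big_enum_val (fun i => F i)) (big_enum_val (fun i => mu (F i))) /=.
rewrite measure_bigsetU_ord // => k l _ _ [x [Fkx Flx]].
by apply: enum_val_inj; apply: tF => //; exists x.
Qed.

Lemma integral2_weighted_le (A B : set T) (psi phi : T -> R) (h : T -> T -> R)
    (c mA mB : R) :
  measurable A -> measurable B -> measurable_fun A psi -> measurable_fun B phi ->
  (forall y, A y -> (0 <= psi y)%R) -> (forall x, B x -> (0 <= phi x)%R) ->
  (0 <= c)%R -> (forall x y, B x -> A y -> (0 <= h x y <= c)%R) ->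
  \int[mu]_(y in A) (psi y)%:E = mA%:E -> \int[mu]_(x in B) (phi x)%:E = mB%:E ->
  \int[mu]_(y in A) \int[mu]_(x in B) (psi y * phi x * h x y)%:E
    <= (c * mB * mA)%:E.
Proof.
move=> mbA mbB mpsi mphi psi0 phi0 c0 h0c massA massB.
have mB0 : (0 <= mB)%R.
  by rewrite -lee_fin -massB; apply: integral_ge0 => x Bx; rewrite lee_fin phi0.
apply: (@le_trans _ _
    (\int[mu]_(y in A) \int[mu]_(x in B) (psi y * phi x * c)%:E)).
  apply: le_ge0_integral => y Ay.
    apply: integral_ge0 => x Bx; have /andP[h0 _] := h0c x y Bx Ay.
    by rewrite lee_fin !mulr_ge0 ?psi0 ?phi0.
  apply: le_ge0_integral => x Bx; have /andP[h0 hc] := h0c x y Bx Ay.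
    by rewrite lee_fin !mulr_ge0 ?psi0 ?phi0.
  by rewrite lee_fin ler_wpM2l ?mulr_ge0 ?psi0 ?phi0.
rewrite (@eq_integral _ _ _ mu A (fun y => (c * mB)%:E * (psi y)%:E)); last first.
  move=> y /set_mem Ay.
  rewrite (@eq_integral _ _ _ mu B (fun x => (psi y * c)%:E * (phi x)%:E)); last first.
    by move=> x _; rewrite -EFinM mulrAC.
  rewrite ge0_integralZl_EFin ?mulr_ge0 ?psi0 //; last exact/measurable_EFinP.
  by rewrite massB -EFinM; congr EFin; ring.
rewrite ge0_integralZl_EFin ?mulr_ge0 //; last exact/measurable_EFinP.
by rewrite massA -EFinM.
Qed.

End NonnegIntegral.

Section ProductPartition.
Local Open Scope ereal_scope.
Context {dT : measure_display} {T : measurableType dT} {R : realType} {I : finType}.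
Context {Om : set T} {C : I -> set T}.
Hypotheses (mC : forall i, measurable (C i)) (tC : trivIset setT C)
  (Om_cells : Om = \bigcup_i C i).
Variable g : {measure set (T * T) -> \bar R}.

Let cell_unique i j x : C i x -> C j x -> i = j.
Proof. by move=> Cix Cjx; apply: tC => //; exists x. Qed.

Let measurable_Om : measurable Om.
Proof. by rewrite Om_cells; apply: fin_bigcup_measurable => //; exact: finite_finset. Qed.

Lemma measure_setX_partitionr A : measurable A -> g (A `*` Om) = \sum_j g (A `*` C j).
Proof.
move=> mA; rewrite Om_cells setX_bigcupr measure_bigcup_fin //.
  by move=> j; exact: measurableX.
by move=> j k _ _ [[y x] [[_ Cjx] [_ Ckx]]]; exact: cell_unique _ _ _ Cjx Ckx.
Qed.

Lemma measure_setX_partitionl B : measurable B -> g (Om `*` B) = \sum_i g (C i `*` B).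
Proof.
move=> mB; rewrite Om_cells setX_bigcupl measure_bigcup_fin //.
  by move=> i; exact: measurableX.
by move=> i k _ _ [[y x] [[Ciy _] [Cky _]]]; exact: cell_unique _ _ _ Ciy Cky.
Qed.

Lemma sum_measure_partition_le_integral (w : I -> I -> R) (f : T * T -> \bar R) :
  (forall i j, 0 <= w i j)%R -> (forall i j z, (C i `*` C j) z -> (w i j)%:E <= f z) ->
  \sum_i \sum_j (w i j)%:E * g (C i `*` C j) <= \int[g]_(z in Om `*` Om) f z.
Proof.
move=> w0 w_le.
pose h z := (\sum_(p : I * I) w p.1 p.2 * \1_(C p.1 `*` C p.2) z)%R.
have mOO : measurable (Om `*` Om) by exact: measurableX.
have mCC (p : I * I) : measurable (C p.1 `*` C p.2) by exact: measurableX.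
have int_h : \int[g]_(z in Om `*` Om) (h z)%:E = \sum_i \sum_j (w i j)%:E * g (C i `*` C j).
  rewrite pair_big /=; under eq_integral do rewrite /h -sumEFin.
  rewrite ge0_integral_sum // => [|p|p z _]; last 2 first.
  - by apply/measurable_EFinP; apply: measurable_funM => //; exact: measurable_indic.
  - by rewrite lee_fin mulr_ge0 // indicE ler0n.
  apply: eq_bigr => p _; under eq_integral do rewrite EFinM.
  rewrite ge0_integralZl_EFin //; last by apply/measurable_EFinP; exact: measurable_indic.
  rewrite integral_indic // setIidl // => -[y x] [/= Cy Cx].
  by rewrite Om_cells; split; [exists p.1 | exists p.2].
have h_le z : (Om `*` Om) z -> (h z)%:E <= f z.
  case: z => y x [/=]; rewrite Om_cells => -[i _ Ciy] [j _ Cjx].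
  rewrite /h (bigD1 (i, j)) //= big1 ?addr0 => [|[i' j'] /= ij'_neq].
    by rewrite indicE mem_set ?mulr1 //; exact: w_le.
  rewrite indicE memNset ?mulr0 // => -[/= Ci'y Cj'x].
  by move: ij'_neq; rewrite (cell_unique _ _ _ Ci'y Ciy) (cell_unique _ _ _ Cj'x Cjx) eqxx.
rewrite -int_h; apply: le_ge0_integral => [z _|]; last exact: h_le.
by rewrite lee_fin sumr_ge0 // => p _; rewrite mulr_ge0 // indicE ler0n.
Qed.

End ProductPartition.

Section ShadowSite.
Context {R : realType} {d : nat}.
Variables (lam : {measure set (d.-tuple R) -> \bar R}) (a : d.-tuple R) (L : R)
  (phiP phiD : d.-tuple R -> R) (r : nat).
Hypotheses (L_gt0 : 0 < L) (r_gt0 : (0 < r)%N).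
Hypotheses (densP : is_density lam (cube a L) phiP)
  (densD : is_density lam (cube a L) phiD).
Notation C := (cell a L r).
Notation cm := (cellmax a L r).

Let density_ge0 phi j x : is_density lam (cube a L) phi -> C j x -> 0 <= phi x.
Proof. by move=> [_ [phi0 _]] Cx; apply: phi0; exact: cell_sub_cube Cx. Qed.

Let measurable_density phi j : is_density lam (cube a L) phi -> measurable_fun (C j) phi.
Proof.
move=> [mphi _]; apply: measurable_funS mphi; first exact: measurable_cube.
exact: cell_sub_cube.
Qed.

Lemma shadow_expectation_le_lp_cost alpha :
  lp_feasible lam a L r phiP phiD alpha ->
  (shadow_expectation lam a L r phiP phiD alpha <= (lp_cost a L r alpha)%:E)%E.
Proof.
move=> [alpha0 rowD colP].
rewrite /shadow_expectation /lp_cost -sumEFin; apply: lee_sum => i _.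
rewrite -sumEFin; apply: lee_sum => j _.
pose mD := \sum_j' alpha i j'; pose mP := \sum_i' alpha i' j.
have edist_bound : (\int[lam]_(y in C i) \int[lam]_(x in C j)
    (phiD y * phiP x * Defs.edist x y)%:E <= (cm i j * mP * mD)%:E)%E.
  apply: integral2_weighted_le; rewrite /mD /mP ?rowD ?colP //.
  - exact: measurable_cell.
  - exact: measurable_cell.
  - exact: measurable_density densD.
  - exact: measurable_density densP.
  - by move=> y; exact: density_ge0 densD.
  - by move=> x; exact: density_ge0 densP.
  - exact: cellmax_ge0.
  - by move=> x y Cx Cy; rewrite sqrtr_ge0 edist_le_cellmax.
rewrite -(rowD i) -(colP j) /= -/mD -/mP.
(* When alpha_ij > 0 both cell masses are positive, so the normalisations in
   [shadow_expectation] cancel; when alpha_ij = 0 the term vanishes. *)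
have [->|alpha_neq0] := eqVneq (alpha i j) 0; first by rewrite !mul0r mul0e.
have alpha_gt0 : 0 < alpha i j by rewrite lt0r alpha_neq0 alpha0.
have mD_gt0 : 0 < mD.
  by apply: lt_le_trans alpha_gt0 _; rewrite /mD (bigD1 j) //= lerDl sumr_ge0.
have mP_gt0 : 0 < mP.
  by apply: lt_le_trans alpha_gt0 _; rewrite /mP (bigD1 i) //= lerDl sumr_ge0.
apply: le_trans (lee_wpmul2l _ edist_bound) _.
  by rewrite lee_fin !mulr_ge0 // ?invr_ge0 ltW.
rewrite -EFinM lee_fin [leLHS](_ : _ = alpha i j * cm i j) //.
by field; rewrite !gt_eqF.
Qed.

End ShadowSite.

Section CouplingBound.
Context {R : realType} {d : nat}.
Variables (lam : {measure set (d.-tuple R) -> \bar R}) (a : d.-tuple R) (L : R)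
  (phiP phiD : d.-tuple R -> R) (r : nat).
Hypotheses (L_gt0 : 0 < L) (r_gt0 : (0 < r)%N).
Hypothesis densD : is_density lam (cube a L) phiD.
Variable g : {measure set (d.-tuple R * d.-tuple R) -> \bar R}.
Hypothesis g_coupling : coupling lam (cube a L) phiD phiP g.
Notation C := (cell a L r).
Notation Om := (cube a L).

Let cells_measurable := measurable_cell a L r.
Let cells_trivIset := trivIset_cell a L r L_gt0 r_gt0.
Let cube_cells := cube_bigcup_cell a L r L_gt0 r_gt0.

Lemma coupling_mass : g (Om `*` Om) = 1%E.
Proof.
have [_ gA _] := g_coupling; have [_ [_ massD]] := densD.
by rewrite gA //; exact: measurable_cube.
Qed.

Lemma coupling_cell_fin_num i j : g (C i `*` C j) \is a fin_num.
Proof.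
rewrite ge0_fin_numE ?measure_ge0 //; apply: (@le_lt_trans _ _ (g (Om `*` Om))).
  apply: le_measure; rewrite ?inE.
  - exact: measurableX (measurable_cell a L r i) (measurable_cell a L r j).
  - exact: measurableX (measurable_cube a L) (measurable_cube a L).
  - by move=> [y x] [/= Cy Cx]; split; [exact: cell_sub_cube Cy | exact: cell_sub_cube Cx].
by rewrite coupling_mass ltry.
Qed.

Lemma coupling_cell_plan_feasible :
  lp_feasible lam a L r phiP phiD (fun i j => fine (g (C i `*` C j))).
Proof.
have [_ gA gB] := g_coupling.
have gE i j : (fine (g (C i `*` C j)))%:E = g (C i `*` C j).
  by rewrite fineK ?coupling_cell_fin_num.
split => [i j|i|j]; first by apply: fine_ge0; exact: measure_ge0.
- rewrite -sumEFin (eq_bigr _ (fun j _ => gE i j)) /cellmass.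
  rewrite -(measure_setX_partitionr cells_measurable cells_trivIset cube_cells) //.
  by rewrite gA //; exact: cell_sub_cube.
- rewrite -sumEFin (eq_bigr _ (fun i _ => gE i j)) /cellmass.
  rewrite -(measure_setX_partitionl cells_measurable cells_trivIset cube_cells) //.
  by rewrite gB //; exact: cell_sub_cube.
Qed.

Lemma coupling_cell_plan_sum :
  \sum_i \sum_j fine (g (C i `*` C j)) = 1.
Proof.
apply: EFin_inj; rewrite -coupling_mass -sumEFin.
rewrite (measure_setX_partitionl cells_measurable cells_trivIset cube_cells);
  last exact: measurable_cube.
apply: eq_bigr => i _; rewrite -sumEFin.
rewrite (measure_setX_partitionr cells_measurable cells_trivIset cube_cells) //.
by apply: eq_bigr => j _; rewrite fineK ?coupling_cell_fin_num.
Qed.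

Lemma lp_cost_le_coupling_cost alpha : lp_optimal lam a L r phiP phiD alpha ->
  ((lp_cost a L r alpha - 2 * cell_diam d L r)%:E <=
     \int[g]_(z in Om `*` Om) (Defs.edist z.2 z.1)%:E)%E.
Proof.
move=> [_ alpha_min].
pose beta i j := fine (g (C i `*` C j)).
(* Clipped at 0 so that [w] is the height of a nonnegative step function. *)
pose w i j := Num.max (cellmax a L r i j - 2 * cell_diam d L r) 0.
have beta_ge0 i j : 0 <= beta i j by apply: fine_ge0; exact: measure_ge0.
have cost_le : lp_cost a L r beta - 2 * cell_diam d L r <= \sum_i \sum_j beta i j * w i j.
  set c := 2 * cell_diam d L r in w *.
  rewrite -[X in _ - X](mulr1 c) -coupling_cell_plan_sum mulr_sumr.
  rewrite /lp_cost -sumrB; apply: ler_sum => i _.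
  rewrite mulr_sumr -sumrB; apply: ler_sum => j _.
  have : cellmax a L r i j - c <= w i j by rewrite le_max lexx.
  by rewrite -/(beta i j); have := beta_ge0 i j; nra.
apply: le_trans (_ : (\sum_i \sum_j beta i j * w i j)%:E <= _)%E.
  by rewrite lee_fin; have := alpha_min beta coupling_cell_plan_feasible; lra.
have -> : (\sum_i \sum_j beta i j * w i j)%:E =
    (\sum_i \sum_j (w i j)%:E * g (C i `*` C j))%E.
  rewrite -sumEFin; apply: eq_bigr => i _; rewrite -sumEFin; apply: eq_bigr => j _.
  by rewrite mulrC EFinM fineK ?coupling_cell_fin_num.
apply: (sum_measure_partition_le_integral cells_measurable cells_trivIset cube_cells).
  by move=> i j; rewrite le_max lexx orbT.
move=> i j [y x] [/= Cy Cx]; rewrite lee_fin ge_max sqrtr_ge0 andbT.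
by rewrite lerBlDr; exact: cellmax_le.
Qed.

End CouplingBound.

Lemma lee_subr_bound {R : realType} (x y : \bar R) (s t : R) :
  (x <= s%:E)%E -> ((s - t)%:E <= y)%E -> (x - y <= t%:E)%E.
Proof.
case: x => [x| |] //; case: y => [y| |] //= xs sy; rewrite ?leNye //.
by rewrite -EFinD lee_fin; rewrite !lee_fin in xs sy; lra.
Qed.

Theorem lemma8 (R : realType) (d : nat)
    (lam : {measure set (d.-tuple R) -> \bar R})
    (a : d.-tuple R) (L : R) (phiP phiD : d.-tuple R -> R) (r : nat)
    (alpha : {ffun 'I_d -> 'I_r} -> {ffun 'I_d -> 'I_r} -> R) :
  is_lebesgue lam ->
  0 < L ->
  is_density lam (cube a L) phiP ->
  is_density lam (cube a L) phiD ->
  (0 < r)%N ->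
  lp_optimal lam a L r phiP phiD alpha ->
  (shadow_expectation lam a L r phiP phiD alpha
     - wasserstein lam (cube a L) phiD phiP
   <= ((2 * L * Num.sqrt (d%:R)) / r%:R)%:E)%E.
Proof.
(* The bound holds for any reference measure [lam]. *)
move=> _ L_gt0 densP densD r_gt0 alpha_opt.
have -> : 2 * L * Num.sqrt d%:R / r%:R = 2 * cell_diam d L r by rewrite /cell_diam; ring.
apply: lee_subr_bound.
  exact: shadow_expectation_le_lp_cost alpha_opt.1.
apply: le_ereal_inf_tmp => _ [g [g_coupling ->]].
exact: lp_cost_le_coupling_cost L_gt0 r_gt0 densD _ g_coupling _ alpha_opt.
Qed.
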